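(* In any category, consider morphisms $f_1,f_2:A_{11}\to A_{12}$, $f'_1,f'_2:A_{11}\to A_{21}$, $g'_1,g'_2:A_{12}\to A_{22}$ and $g_1,g_2:A_{21}\to A_{22}$ such that $g_i\circ f'_j=g'_j\circ f_i$ for all $i,j\in\{1,2\}$, and suppose there exist $s:A_{12}\to A_{11}$ and $s':A_{21}\to A_{11}$ with $f_1 s=f_2 s=1_{A_{12}}$ and $f'_1 s'=f'_2 s'=1_{A_{21}}$. Then a morphism $x:A_{22}\to B$ satisfies $x g'_1 f_1=x g'_2 f_2$ if and only if $x g_1=x g_2$ and $x g'_1=x g'_2$. Consequently, the coequalizer of $g'_1\circ f_1$ and $g'_2\circ f_2$ is the cointersection of the coequalizer of $g_1,g_2$ and the coequalizer of $g'_1,g'_2$.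
   Context: The cointersection of two quotient maps $c:A_{22}\to C$ and $c':A_{22}\to C'$ is their pushout, i.e. the universal morphism $A_{22}\to D$ through which both factor. *)

Record Category : Type := {
  Obj :> Type;
  Hom : Obj -> Obj -> Type;
  idm : forall A : Obj, Hom A A;
  comp : forall {A B C : Obj}, Hom B C -> Hom A B -> Hom A C;
  comp_assoc : forall (A B C D : Obj) (h : Hom C D) (g : Hom B C) (f : Hom A B),
      comp h (comp g f) = comp (comp h g) f;
  comp_id_l : forall (A B : Obj) (f : Hom A B), comp (idm B) f = f;
  comp_id_r : forall (A B : Obj) (f : Hom A B), comp f (idm A) = f
}.

Arguments Hom {c} _ _.
Arguments idm {c} _.
Arguments comp {c} {A B C} _ _.

Definition is_coequalizer {C : Category} {X Y Q : C}
  (f g : Hom X Y) (q : Hom Y Q) : Prop :=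
  comp q f = comp q g /\
  forall (B : C) (x : Hom Y B), comp x f = comp x g ->
    exists! u : Hom Q B, comp u q = x.

Definition is_cointersection {C : Category} {A C1 C2 D : C}
  (c : Hom A C1) (c' : Hom A C2) (d : Hom A D) : Prop :=
  (exists u : Hom C1 D, comp u c = d) /\
  (exists u' : Hom C2 D, comp u' c' = d) /\
  forall (B : C) (x : Hom A B),
    (exists v : Hom C1 B, comp v c = x) ->
    (exists v' : Hom C2 B, comp v' c' = x) ->
    exists! w : Hom D B, comp w d = x.

From Stdlib Require Import Setoid.

(* The morphisms f_i and f'_j are split epimorphisms with a common section, so
   they can be cancelled on the right: this recovers x g_1 = x g_2 and
   x g'_1 = x g'_2 from x g'_1 f_1 = x g'_2 f_2 through the commuting squares.
   Conversely the squares rewrite g'_1 f_1 into g'_2 f_2 once x coequalizes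
   both pairs.  Hence the cocones of (g'_1 f_1, g'_2 f_2) are exactly the maps
   factoring through both coequalizers, which makes the coequalizer of this
   pair a cointersection. *)

Lemma cancel_common_section {C : Category} {X Y Z : C}
  (f1 f2 : Hom X Y) (s : Hom Y X) (x y : Hom Y Z) :
  comp f1 s = idm Y -> comp f2 s = idm Y ->
  comp x f1 = comp y f2 -> x = y.
Proof.
  intros Hs1 Hs2 E.
  rewrite <- (comp_id_r _ _ _ x), <- (comp_id_r _ _ _ y).
  rewrite <- Hs1 at 1; rewrite <- Hs2, !comp_assoc, E; reflexivity.
Qed.

Lemma coequalizer_factors_iff {C : Category} {X Y Q B : C}
  (f g : Hom X Y) (q : Hom Y Q) (x : Hom Y B) :
  is_coequalizer f g q ->
  (comp x f = comp x g <-> exists v : Hom Q B, comp v q = x).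
Proof.
  intros [Hq Uq]; split.
  - intros Hx; destruct (Uq B x Hx) as [v [Hv _]]; eauto.
  - intros [v <-]; rewrite <- !comp_assoc, Hq; reflexivity.
Qed.

Lemma coequalizer_iff_cointersection {C : Category} {X A Q Cc Cc' : C}
  (h1 h2 : Hom X A) (c : Hom A Cc) (c' : Hom A Cc') (q : Hom A Q) :
  (forall (B : C) (x : Hom A B),
     comp x h1 = comp x h2 <->
     (exists v : Hom Cc B, comp v c = x) /\ (exists v' : Hom Cc' B, comp v' c' = x)) ->
  is_coequalizer h1 h2 q <-> is_cointersection c c' q.
Proof.
  intros cocone_iff; split.
  - intros [Hq Uq].
    destruct (proj1 (cocone_iff Q q) Hq) as [Fc Fc'].
    repeat split; auto.
    intros B x Ex Ex'; apply Uq, cocone_iff; auto.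
  - intros [Fc [Fc' U]]; split.
    + apply cocone_iff; auto.
    + intros B x Hx; destruct (proj1 (cocone_iff B x) Hx); auto.
Qed.

Section SplitSquares.

Variables (C : Category) (A11 A12 A21 A22 : C).
Variables (f1 f2 : Hom A11 A12) (f'1 f'2 : Hom A11 A21).
Variables (g'1 g'2 : Hom A12 A22) (g1 g2 : Hom A21 A22).
Hypotheses (H11 : comp g1 f'1 = comp g'1 f1)
           (H21 : comp g2 f'1 = comp g'1 f2)
           (H22 : comp g2 f'2 = comp g'2 f2).
Variables (s : Hom A12 A11) (s' : Hom A21 A11).
Hypotheses (Hs1 : comp f1 s = idm A12) (Hs2 : comp f2 s = idm A12)
           (Hs'1 : comp f'1 s' = idm A21) (Hs'2 : comp f'2 s' = idm A21).

Lemma diagonal_cocone_iff (B : C) (x : Hom A22 B) :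
  comp x (comp g'1 f1) = comp x (comp g'2 f2) <->
  comp x g1 = comp x g2 /\ comp x g'1 = comp x g'2.
Proof.
  split.
  - intros E; split.
    + apply (cancel_common_section f'1 f'2 s'); auto.
      rewrite <- !comp_assoc, H11, H22; exact E.
    + apply (cancel_common_section f1 f2 s); auto.
      rewrite <- !comp_assoc; exact E.
  - intros [E E'].
    rewrite <- H11, comp_assoc, E, <- comp_assoc, H21, comp_assoc, E'.
    rewrite <- comp_assoc; reflexivity.
Qed.

End SplitSquares.

Theorem proposition1 (C : Category) (A11 A12 A21 A22 : C)
  (f1 f2 : Hom A11 A12) (f'1 f'2 : Hom A11 A21)
  (g'1 g'2 : Hom A12 A22) (g1 g2 : Hom A21 A22)
  (H11 : comp g1 f'1 = comp g'1 f1)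
  (H12 : comp g1 f'2 = comp g'2 f1)
  (H21 : comp g2 f'1 = comp g'1 f2)
  (H22 : comp g2 f'2 = comp g'2 f2)
  (s : Hom A12 A11) (s' : Hom A21 A11)
  (Hs1 : comp f1 s = idm A12) (Hs2 : comp f2 s = idm A12)
  (Hs'1 : comp f'1 s' = idm A21) (Hs'2 : comp f'2 s' = idm A21) :
  (forall (B : C) (x : Hom A22 B),
     comp x (comp g'1 f1) = comp x (comp g'2 f2) <->
     (comp x g1 = comp x g2 /\ comp x g'1 = comp x g'2)) /\
  (forall (Cc Cc' Q : C) (c : Hom A22 Cc) (c' : Hom A22 Cc') (q : Hom A22 Q),
     is_coequalizer g1 g2 c ->
     is_coequalizer g'1 g'2 c' ->
     (is_coequalizer (comp g'1 f1) (comp g'2 f2) q <->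
      is_cointersection c c' q)).
Proof.
  pose proof (diagonal_cocone_iff C A11 A12 A21 A22 f1 f2 f'1 f'2 g'1 g'2 g1 g2
                H11 H21 H22 s s' Hs1 Hs2 Hs'1 Hs'2) as cocone_iff.
  split; [exact cocone_iff |].
  intros Cc Cc' Q c c' q Hc Hc'.
  apply coequalizer_iff_cointersection.
  intros B x.
  rewrite cocone_iff, (coequalizer_factors_iff _ _ _ x Hc),
    (coequalizer_factors_iff _ _ _ x Hc').
  reflexivity.
Qed.
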